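(* If the OWA weights satisfy $v_1>0$, then \textsc{Min-Owa}~$1|prec|\max w_jT_j$ is approximable within $1/v_1$.
   Context: Single machine scheduling under scenarios. A set of jobs $J=\{1,\dots,n\}$ must be processed nonpreemptively on one machine, all jobs being available at time $0$; jobs may be subject to precedence constraints given by a partial order ($i\rightarrow j$ means job $j$ cannot start before job $i$ is completed). A schedule is a permutation $\pi$ of $J$ respecting the precedence constraints; $\Pi$ denotes the set of all schedules. A scenario set $\Gamma=\{S_1,\dots,S_K\}$, $K>1$, is given (part of the input); under scenario $S_i$ job $j$ has a nonnegative processing time $p_j(S_i)$, nonnegative due date $d_j(S_i)$ and nonnegative weight $w_j(S_i)$. $C_j(\pi,S_i)$ is the completion time of $j$ in $\pi$ under $S_i$, i.e. the sum of $p_k(S_i)$ over $k=j$ and all jobs $k$ preceding $j$ in $\pi$. The cost of $\pi$ under $S_i$ is $f(\pi,S_i)=\max_{j\in J} w_j(S_i)[C_j(\pi,S_i)-d_j(S_i)]^+$, where $[x]^+=\max\{0,x\}$. OWA criterion: given weights $\pmb v=(v_1,\dots,v_K)$ with $v_i\in[0,1]$ and $\sum_i v_i=1$, and reals $f_1,\dots,f_K$, let $\sigma$ be a permutation of $[K]$ with $f_{\sigma(1)}\ge\dots\ge f_{\sigma(K)}$ and set $\mathrm{owa}_{\pmb v}(f_1,\dots,f_K)=\sum_{i\in[K]}v_if_{\sigma(i)}$. Set $\mathrm{OWA}(\pi)=\mathrm{owa}_{\pmb v}(f(\pi,S_1),\dots,f(\pi,S_K))$; \textsc{Min-Owa}~$1|prec|\max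 w_jT_j$ is $\min_{\pi\in\Pi}\mathrm{OWA}(\pi)$. A problem is approximable within $\rho$ if a polynomial-time algorithm returns a schedule $\pi$ with $\mathrm{OWA}(\pi)\le\rho\cdot\min_{\sigma\in\Pi}\mathrm{OWA}(\sigma)$. *)

From HB Require Import structures.
From mathcomp Require Import all_boot all_order all_algebra.
Set Implicit Arguments. Unset Strict Implicit. Unset Printing Implicit Defensive.
Import Order.TTheory GRing.Theory Num.Theory.
Local Open Scope ring_scope.

Section Sched.
Variables (R : realFieldType) (n K : nat).

(* precedence i -> j : job j cannot start before job i is completed *)
Definition strict_partial_order (prec : rel 'I_n) : Prop :=
  irreflexive prec /\ transitive prec.

Definition is_schedule (prec : rel 'I_n) (s : seq 'I_n) : Prop :=
  perm_eq s (enum 'I_n) /\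
  forall i j : 'I_n, prec i j -> (index i s < index j s)%N.

Definition pos (x : R) : R := Num.max 0 x.

Definition completion (p : 'I_K -> 'I_n -> R) (s : seq 'I_n) (S : 'I_K)
  (j : 'I_n) : R :=
  \sum_(k <- take (index j s).+1 s) p S k.

Definition cost (p d w : 'I_K -> 'I_n -> R) (s : seq 'I_n) (S : 'I_K) : R :=
  \big[Num.max/0]_(j < n) (w S j * pos (completion p s S j - d S j)).

Definition owa (v : 'I_K -> R) (f : 'I_K -> R) : R :=
  let sf := sort (fun x y : R => y <= x) [seq f k | k <- enum 'I_K] in
  \sum_(i < K) v i * nth 0 sf i.

Definition OWA (v : 'I_K -> R) (p d w : 'I_K -> 'I_n -> R) (s : seq 'I_n) : R :=
  owa v (cost p d w s).

Definition first_weight (v : 'I_K -> R) : R := nth 0 [seq v i | i <- enum 'I_K] 0.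

(* ---- The polynomial-time algorithm: backward Lawler rule for the min-max
   criterion.  Repeatedly, among the unscheduled jobs without unscheduled
   successors, put last the job j minimizing
   max_i w_j(S_i) [P(S_i) - d_j(S_i)]^+, P(S_i) = total processing time of
   the unscheduled jobs under S_i. ---- *)

Definition argmin_seq (g : 'I_n -> R) (x0 : 'I_n) (s : seq 'I_n) : 'I_n :=
  foldl (fun b x => if g x < g b then x else b) x0 s.

Definition last_cost (p d w : 'I_K -> 'I_n -> R) (U : seq 'I_n) (j : 'I_n) : R :=
  \big[Num.max/0]_(i < K) (w i j * pos ((\sum_(k <- U) p i k) - d i j)).

Fixpoint lawler_aux (prec : rel 'I_n) (p d w : 'I_K -> 'I_n -> R)
  (fuel : nat) (U : seq 'I_n) : seq 'I_n :=
  match fuel with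
  | 0%N => U
  | fuel'.+1 =>
    match [seq j <- U | all (fun k => ~~ prec j k) U] with
    | [::] => U
    | c :: cs =>
      let j := argmin_seq (last_cost p d w U) c cs in
      rcons (lawler_aux prec p d w fuel' (rem j U)) j
    end
  end.

Definition lawler (prec : rel 'I_n) (p d w : 'I_K -> 'I_n -> R) : seq 'I_n :=
  lawler_aux prec p d w n (enum 'I_n).

End Sched.

From HB Require Import structures.
From mathcomp Require Import all_boot all_order all_algebra.
From mathcomp Require Import zify.
Import Order.TTheory GRing.Theory Num.Theory.
Local Open Scope ring_scope.
Set Implicit Arguments. Unset Strict Implicit.

(* For nonnegative costs, v_1 * max_i f_i <= owa_v(f) <= max_i f_i, so it
   suffices to minimise the maximum cost over the scenarios.  That maximum is
   the min-max criterion max_j g_j(C_j) with g_j(t) = max_i w_j(S_i)[t - d_j(S_i)]^+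
   nondecreasing in the completion time, which Lawler's backward rule solves
   exactly: in any feasible schedule of a job set U the last job is a sink of
   the precedence order on U and completes at P(U), so its cost is at least
   that of the job chosen by the rule, and deleting that chosen job from a
   schedule never increases the criterion of the remaining jobs. *)

Section OWABounds.
Variables (R : realFieldType) (K : nat) (v f : 'I_K -> R).
Hypothesis v_ge0 : forall i, 0 <= v i.

Lemma owa_le_bigmax :
  \sum_(i < K) v i = 1 -> owa v f <= \big[Num.max/0]_(i < K) f i.
Proof.
move=> v_sum1; rewrite /owa /=; set sf := sort _ _.
set M := \big[Num.max/0]_(i < K) f i.
apply: le_trans (_ : \sum_(i < K) v i * M <= _); last first.
  by rewrite -mulr_suml v_sum1 mul1r.
apply: ler_sum => i _; apply: ler_wpM2l => //.
have : nth 0 sf i \in sf by rewrite mem_nth // size_sort size_map size_enum_ord.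
by rewrite mem_sort => /mapP [k _ ->]; apply: le_bigmax.
Qed.

Lemma first_weight_bigmax_le_owa : (forall i, 0 <= f i) ->
  first_weight v * \big[Num.max/0]_(i < K) f i <= owa v f.
Proof.
move=> f_ge0; rewrite /owa /=; set sf := sort _ _.
have sf_size : size sf = K by rewrite size_sort size_map size_enum_ord.
have sf_ge0 i : 0 <= nth 0 sf i.
  have [i_lt|i_ge] := ltnP i (size sf); last by rewrite nth_default.
  by move: (mem_nth 0 i_lt); rewrite mem_sort => /mapP [k _ ->].
have [K0|K_gt0] := posnP K.
  rewrite /first_weight nth_default ?mul0r; last by rewrite size_map size_enum_ord K0.
  by apply: sumr_ge0 => i _; apply: mulr_ge0.
pose i0 : 'I_K := Ordinal K_gt0.
have -> : first_weight v = v i0.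
  rewrite /first_weight (nth_map i0) ?size_enum_ord //; congr v.
  by apply: val_inj; rewrite /= nth_enum_ord.
rewrite [X in _ <= X](bigD1 i0) //= -[X in X <= _]addr0.
apply: lerD; last by apply: sumr_ge0 => i _; apply: mulr_ge0.
apply: ler_wpM2l => //; apply: bigmax_le => // k _.
have sf_sorted : sorted (fun x y : R => y <= x) sf.
  by apply: sort_sorted => x y; exact: le_total.
have fk_sf : f k \in sf by rewrite mem_sort map_f ?mem_enum.
rewrite -(nth_index 0 fk_sf).
apply: (sorted_leq_nth (leT := fun x y : R => y <= x)) => //.
- by move=> x y z /= yx zy; apply: le_trans zy yx.
- by rewrite inE sf_size.
- by rewrite inE index_mem.
Qed.

End OWABounds.

Lemma ler_wpM2l_pos (R : realFieldType) (a b x y : R) :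
  0 <= a -> x <= y -> a * pos (x - b) <= a * pos (y - b).
Proof. by move=> a_ge0 xy; rewrite ler_wpM2l // le_max2 // lerD2r. Qed.

Lemma index_rem_lt (T : eqType) (s : seq T) (j a b : T) :
  a != j -> b != j ->
  (index a (rem j s) < index b (rem j s))%N = (index a s < index b s)%N.
Proof.
move=> aj bj; elim: s => [|x s IH] //; rewrite rem_cons.
have [->|_] := eqVneq x j; first by rewrite /= !(eq_sym j) (negbTE aj) (negbTE bj).
by rewrite /=; case: (x =P a); case: (x =P b).
Qed.

Section Precedence.
Variables (n : nat) (prec : rel 'I_n).

Definition feasible (U s : seq 'I_n) : Prop :=
  perm_eq s U /\ {in U &, forall a b, prec a b -> (index a s < index b s)%N}.

Definition sink (U : seq 'I_n) (j : 'I_n) : bool := all (fun k => ~~ prec j k) U.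

Lemma has_sink (U : seq 'I_n) :
  strict_partial_order prec -> U != [::] -> has (sink U) U.
Proof.
move=> [prec_irr prec_tr]; case: U => [|x U'] // _; set U := x :: U'.
(* A job with the most predecessors in U is a sink: an edge j -> k would give
   k all the predecessors of j and j itself. *)
pose npred j := count (prec^~ j) U.
have [j jU npred_max] := @arg_maxnP _ x (mem U) npred (mem_head x U').
apply/hasP; exists j => //; apply/allP => k kU; apply/negP => jk.
suff : (npred j < npred k)%N by move/leq_trans/(_ (npred_max k kU)); rewrite ltnn.
have j_not_pred : count (predI (prec^~ j) (pred1 j)) U = 0%N.
  apply/eqP; rewrite -leqn0 leqNgt -has_count; apply/hasPn => a _ /=.
  by apply/andP => -[aj /eqP a_j]; rewrite a_j prec_irr in aj.
have : (npred j + count (pred1 j) U <= npred k)%N.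
  rewrite -count_predUI j_not_pred addn0; apply: sub_count => a /= /orP[aj|/eqP->] //.
  exact: prec_tr aj jk.
have : (0 < count (pred1 j) U)%N by rewrite -has_count; apply/hasP; exists j => /=.
lia.
Qed.

Lemma feasible_rem (U s : seq 'I_n) (j : 'I_n) :
  uniq U -> j \in U -> feasible U s -> feasible (rem j U) (rem j s).
Proof.
move=> U_uniq jU [sU s_prec]; have js : j \in s by rewrite (perm_mem sU).
split.
  by rewrite -(perm_cons j) -(permPl (perm_to_rem js)) -(permPr (perm_to_rem jU)).
move=> a b; rewrite !mem_rem_uniq // !inE => /andP[aj aU] /andP[bj bU] ab.
by rewrite index_rem_lt // s_prec.
Qed.

Lemma feasible_rcons (U L : seq 'I_n) (j : 'I_n) :
  uniq U -> j \in U -> sink U j ->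
  feasible (rem j U) L -> feasible U (rcons L j).
Proof.
move=> U_uniq jU j_sink [LU L_prec].
have jL : j \notin L by rewrite (perm_mem LU) mem_rem_uniqF.
have inL a : a \in U -> a != j -> a \in L.
  by move=> aU aj; rewrite (perm_mem LU) mem_rem_uniq // inE aj.
split.
  by rewrite perm_rcons (permPr (perm_to_rem jU)) perm_cons.
move=> a b aU bU ab; rewrite -cats1 !index_cat.
have aj : a != j by apply: contraTneq ab => ->; move/allP: j_sink => /(_ b bU).
have [bj|bj] := eqVneq b j.
  by rewrite bj (negbTE jL) inL //= eqxx addn0 index_mem inL.
rewrite !inL // L_prec // mem_rem_uniq // inE ?aj ?bj //.
Qed.

End Precedence.

Lemma argmin_seqP (R : realFieldType) (n : nat) (g : 'I_n -> R) (x0 : 'I_n) s :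
  argmin_seq g x0 s \in x0 :: s /\
  forall y, y \in x0 :: s -> g (argmin_seq g x0 s) <= g y.
Proof.
elim: s x0 => [|a s IH] x0.
  by split=> [|y]; [exact: mem_head | rewrite inE => /eqP->].
rewrite /argmin_seq /=; set b := if g a < g x0 then a else x0.
have [b_mem b_min] := IH b; rewrite -/(argmin_seq g b s).
have gb : g b <= g a /\ g b <= g x0.
  by rewrite /b; case: ltP => ? //; split=> //; exact: ltW.
split.
  move: b_mem; rewrite inE => /predU1P[->|bs]; last by rewrite !inE bs !orbT.
  by rewrite /b; case: ifP; rewrite !inE eqxx ?orbT.
move=> y; rewrite !inE => /or3P[/eqP->|/eqP->|ys].
- exact: le_trans (b_min _ (mem_head _ _)) gb.2.
- exact: le_trans (b_min _ (mem_head _ _)) gb.1.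
- by apply: b_min; rewrite inE ys orbT.
Qed.

Section MinMaxCriterion.
Variables (R : realFieldType) (n K : nat) (p d w : 'I_K -> 'I_n -> R).
Hypothesis p_ge0 : forall S j, 0 <= p S j.
Hypothesis w_ge0 : forall S j, 0 <= w S j.

Definition job_cost (s : seq 'I_n) (j : 'I_n) : R :=
  \big[Num.max/0]_(i < K) (w i j * pos (completion p s i j - d i j)).

Definition minmax_cost (s : seq 'I_n) : R := \big[Num.max/0]_(j <- s) job_cost s j.

Lemma bigmax_cost (s : seq 'I_n) : perm_eq s (enum 'I_n) ->
  \big[Num.max/0]_(i < K) cost p d w s i = minmax_cost s.
Proof.
move=> s_perm; have js j : j \in s by rewrite (perm_mem s_perm) mem_enum.
apply: le_anti; apply/andP; split.
  apply: bigmax_le => [|i _]; first exact: bigmax_ge_id.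
  apply: bigmax_le => [|j _]; first exact: bigmax_ge_id.
  by apply: (bigmax_sup_seq _ j) => //; apply: le_bigmax.
apply: bigmax_le => [|j _]; first exact: bigmax_ge_id.
apply: bigmax_le => [|i _]; first exact: bigmax_ge_id.
by apply: (bigmax_sup i) => //; apply: le_bigmax.
Qed.

Lemma completion_rem (s : seq 'I_n) (S : 'I_K) (x k : 'I_n) :
  k != x -> completion p (rem x s) S k <= completion p s S k.
Proof.
move=> kx; rewrite /completion; elim: s => [|a s IH] //; rewrite rem_cons.
have [->|ax] := eqVneq a x.
  by rewrite /= eq_sym (negbTE kx) big_cons lerDr.
by rewrite /=; case: (a =P k) => _ /=; rewrite ?take0 // !big_cons lerD2l.
Qed.

Lemma completion_rcons (L : seq 'I_n) (S : 'I_K) (j k : 'I_n) :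
  k \in L -> completion p (rcons L j) S k = completion p L S k.
Proof.
by move=> kL; rewrite /completion -cats1 index_cat kL takel_cat // index_mem.
Qed.

Lemma completion_rcons_last (L : seq 'I_n) (S : 'I_K) (j : 'I_n) :
  j \notin L -> completion p (rcons L j) S j = \sum_(k <- rcons L j) p S k.
Proof.
move=> jL; rewrite /completion -cats1 index_cat (negbTE jL) /= eqxx addn0.
by rewrite take_oversize // size_cat addn1.
Qed.

Lemma minmax_cost_rem (s : seq 'I_n) (j : 'I_n) :
  uniq s -> minmax_cost (rem j s) <= minmax_cost s.
Proof.
move=> s_uniq; rewrite /minmax_cost [X in X <= _]big_seq.
apply: bigmax_le => [|x]; first exact: bigmax_ge_id.
rewrite mem_rem_uniq // inE => /andP[xj xs].
apply: (bigmax_sup_seq _ x) => //; apply: le_bigmax2 => i _.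
exact/ler_wpM2l_pos/completion_rem.
Qed.

Lemma minmax_cost_rcons_le (L : seq 'I_n) (j : 'I_n) (c : R) :
  j \notin L -> minmax_cost L <= c -> last_cost p d w (rcons L j) j <= c ->
  minmax_cost (rcons L j) <= c.
Proof.
move=> jL L_le j_le; rewrite /minmax_cost big_seq; apply: bigmax_le => [|x].
  exact: le_trans (bigmax_ge_id _ _ _ _) L_le.
rewrite mem_rcons inE => /predU1P[->|xL].
  by rewrite /job_cost; under eq_bigr => i _ do rewrite completion_rcons_last //.
apply: le_trans L_le; apply: (bigmax_sup_seq _ x) => //.
by rewrite /job_cost; under eq_bigr => i _ do rewrite completion_rcons //.
Qed.

Lemma last_cost_perm (U V : seq 'I_n) (j : 'I_n) :
  perm_eq U V -> last_cost p d w U j = last_cost p d w V j.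
Proof. by move=> UV; apply: eq_bigr => i _; rewrite (perm_big _ UV). Qed.

End MinMaxCriterion.

Section LawlerRule.
Variables (R : realFieldType) (n K : nat) (prec : rel 'I_n).
Variables (p d w : 'I_K -> 'I_n -> R).
Hypothesis prec_order : strict_partial_order prec.
Hypothesis p_ge0 : forall S j, 0 <= p S j.
Hypothesis w_ge0 : forall S j, 0 <= w S j.

Lemma exists_sink_last_cost_le (U s : seq 'I_n) :
  uniq U -> feasible prec U s -> s != [::] ->
  exists2 l, l \in [seq j <- U | sink prec U j] &
    last_cost p d w U l <= minmax_cost p d w s.
Proof.
move=> U_uniq [sU s_prec]; case/lastP: s sU s_prec => [|s' l] // sU s_prec _.
have lU : l \in U by rewrite -(perm_mem sU) mem_rcons mem_head.
have ls' : l \notin s'.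
  by move: U_uniq; rewrite -(perm_uniq sU) rcons_uniq => /andP[].
exists l.
  rewrite mem_filter lU andbT; apply/allP => k kU; apply/negP => lk.
  have := s_prec l k lU kU lk; rewrite -cats1 !index_cat (negbTE ls') /= eqxx addn0.
  have : k \in rcons s' l by rewrite (perm_mem sU).
  rewrite mem_rcons inE => /predU1P[->|ks'].
    by rewrite (negbTE ls') /= eqxx addn0 ltnn.
  by rewrite ks' ltnNge ltnW // index_mem.
apply: (bigmax_sup_seq _ l); rewrite ?mem_rcons ?mem_head //.
rewrite -(last_cost_perm p d w _ sU) /job_cost.
by under eq_bigr => i _ do rewrite completion_rcons_last //.
Qed.

Lemma lawler_aux_opt (fuel : nat) (U : seq 'I_n) :
  uniq U -> (size U <= fuel)%N ->
  feasible prec U (lawler_aux prec p d w fuel U) /\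
  forall s, feasible prec U s ->
    minmax_cost p d w (lawler_aux prec p d w fuel U) <= minmax_cost p d w s.
Proof.
have nil_opt : feasible prec [::] [::] /\
    forall s, feasible prec [::] s -> minmax_cost p d w [::] <= minmax_cost p d w s.
  by split=> [|s _]; [split | rewrite /minmax_cost big_nil; exact: bigmax_ge_id].
elim: fuel U => [|fuel IH] U U_uniq U_size /=.
  by move: U_size; rewrite leqn0 size_eq0 => /eqP->.
case E: [seq j <- U | sink prec U j] => [|c cs].
  have [U_nil|U_nnil] := eqVneq U [::]; first by rewrite U_nil.
  by move: (has_sink prec_order U_nnil); rewrite has_filter E.
have [j_cand j_min] := argmin_seqP (last_cost p d w U) c cs.
set j := argmin_seq _ c cs in j_cand j_min *.
have : j \in [seq j <- U | sink prec U j] by rewrite E.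
rewrite mem_filter => /andP[j_sink jU].
have U'_size : (size (rem j U) <= fuel)%N.
  by rewrite size_rem //; case: (size U) U_size.
have [L_feas L_opt] := IH _ (rem_uniq j U_uniq) U'_size.
set L := lawler_aux _ _ _ _ fuel (rem j U) in L_feas L_opt *.
have LU_feas := feasible_rcons U_uniq jU j_sink L_feas.
split=> // s s_feas.
have s_nnil : s != [::].
  by apply: contraTneq jU => s_nil; rewrite -(perm_mem s_feas.1) s_nil.
have [l l_cand l_le] := exists_sink_last_cost_le U_uniq s_feas s_nnil.
apply: minmax_cost_rcons_le.
- by rewrite (perm_mem L_feas.1) mem_rem_uniqF.
- apply: le_trans (L_opt _ (feasible_rem U_uniq jU s_feas)) _.
  by apply: minmax_cost_rem => //; rewrite (perm_uniq s_feas.1).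
- rewrite (last_cost_perm p d w _ LU_feas.1); apply: le_trans l_le.
  by apply: j_min; rewrite -E.
Qed.

End LawlerRule.

Unset Implicit Arguments.

Theorem corollary1 (R : realFieldType) (n K : nat) (hK : (1 < K)%N)
  (prec : rel 'I_n) (hprec : strict_partial_order prec)
  (p d w : 'I_K -> 'I_n -> R)
  (hp : forall S j, 0 <= p S j) (hd : forall S j, 0 <= d S j)
  (hw : forall S j, 0 <= w S j)
  (v : 'I_K -> R) (hv : forall i, 0 <= v i <= 1) (hvsum : \sum_(i < K) v i = 1)
  (hv1 : 0 < first_weight v) :
  is_schedule prec (lawler prec p d w) /\
  forall sigma : seq 'I_n, is_schedule prec sigma ->
    OWA v p d w (lawler prec p d w) <= (first_weight v)^-1 * OWA v p d w sigma.
Proof.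
have v_ge0 i : 0 <= v i by case/andP: (hv i).
have cost_ge0 s i : 0 <= cost p d w s i by exact: bigmax_ge_id.
have [[lawler_perm lawler_prec] lawler_opt] :=
  lawler_aux_opt d hprec hp hw (enum_uniq 'I_n) (eq_leq (size_enum_ord n)).
split=> [|sigma [sigma_perm sigma_prec]].
  by split=> // a b; apply: lawler_prec; rewrite mem_enum.
rewrite /OWA ler_pdivlMl //.
apply: le_trans (ler_wpM2l (ltW hv1) (owa_le_bigmax _ v_ge0 hvsum)) _.
apply: le_trans _ (first_weight_bigmax_le_owa v_ge0 (cost_ge0 sigma)).
apply: ler_wpM2l; first exact: ltW.
rewrite !bigmax_cost //; apply: lawler_opt; split=> // a b _ _; exact: sigma_prec.
Qed.
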